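(* Let $\mathbb{X}=\mathbb{X}(p_1,p_2,p_3)$ be a weighted projective line over an algebraically closed field with $\chi_{\mathbb{X}}<0$, and let $\mathcal{S}=\{\vec{x}\in\mathbb{L}\mid 0\leq\vec{x}\leq n\vec{\omega}+\vec{c}\text{ for all integers }n\geq 2\}$. Then there exists a bijection between the set of $\tau$-orbits of line bundles in $\mathrm{coh}\,\mathbb{X}$ and $\mathcal{S}$.
   Context: $\mathbb{L}=\mathbb{L}(p_1,p_2,p_3)$ ($p_i\geq 2$) is the abelian group generated by $\vec{x}_1,\vec{x}_2,\vec{x}_3$ with $p_1\vec{x}_1=p_2\vec{x}_2=p_3\vec{x}_3=:\vec{c}$; every $\vec{x}\in\mathbb{L}$ has a unique normal form $\vec{x}=\sum_i l_i\vec{x}_i+l\vec{c}$ with $0\leq l_i\leq p_i-1$, $l\in\mathbb{Z}$, and $\vec{x}\geq \vec{y}$ means that $\vec{x}-\vec{y}$ is a nonnegative integer combination of $\vec{x}_1,\vec{x}_2,\vec{x}_3$. $\vec{\omega}=\vec{c}-\sum_i\vec{x}_i$ and $\chi_{\mathbb{X}}=2-\sum_{i=1}^3(1-1/p_i)$. $\mathrm{coh}\,\mathbb{X}=\mathrm{mod}^{\mathbb{L}}S/\mathrm{mod}^{\mathbb{L}}_0S$ for $S=k[x_1,x_2,x_3]/(x_1^{p_1}+x_2^{p_2}+x_3^{p_3})$ graded by $\deg x_i=\vec{x}_i$; up to isomorphism the line bundles are the $\mathcal{O}(\vec{x})$, $\vec{x}\in\mathbb{L}$, with $\mathrm{Hom}(\mathcal{O}(\vec{x}),\mathcal{O}(\vec{y}))\cong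 S_{\vec{y}-\vec{x}}$, and the Auslander–Reiten translation is $\tau\mathcal{O}(\vec{x})=\mathcal{O}(\vec{x}+\vec{\omega})$. *)

From HB Require Import structures.
From mathcomp Require Import all_boot all_order all_algebra.
Set Implicit Arguments. Unset Strict Implicit. Unset Printing Implicit Defensive.
Import Order.TTheory GRing.Theory Num.Theory.
Local Open Scope ring_scope.

(* The string group L = L(p1,p2,p3), presented as the quotient of Z^4
   (coefficients of x1, x2, x3, c) by the relations p_i x_i = c. *)
Record Lrep := mkL { cx1 : int; cx2 : int; cx3 : int; cc : int }.

Definition Lnf (p1 p2 p3 : nat) (v : Lrep) : Lrep :=
  mkL (cx1 v %% p1)%Z (cx2 v %% p2)%Z (cx3 v %% p3)%Z
      (cc v + (cx1 v %/ p1)%Z + (cx2 v %/ p2)%Z + (cx3 v %/ p3)%Z).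

Definition Leq (p1 p2 p3 : nat) (u v : Lrep) : Prop := Lnf p1 p2 p3 u = Lnf p1 p2 p3 v.

Definition Ladd (u v : Lrep) : Lrep :=
  mkL (cx1 u + cx1 v) (cx2 u + cx2 v) (cx3 u + cx3 v) (cc u + cc v).
Definition Lscale (n : int) (u : Lrep) : Lrep :=
  mkL (n * cx1 u) (n * cx2 u) (n * cx3 u) (n * cc u).
Definition L0 : Lrep := mkL 0 0 0 0.
Definition Lc : Lrep := mkL 0 0 0 1.
Definition Lomega : Lrep := mkL (-1) (-1) (-1) 1.

Definition Lle (p1 p2 p3 : nat) (x y : Lrep) : Prop :=
  exists a b c : nat, Leq p1 p2 p3 y (Ladd x (mkL a%:Z b%:Z c%:Z 0)).

Definition chiX (p1 p2 p3 : nat) : rat :=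
  2 - ((1 - (p1%:R)^-1) + (1 - (p2%:R)^-1) + (1 - (p3%:R)^-1)).

Definition inS (p1 p2 p3 : nat) (x : Lrep) : Prop :=
  Lle p1 p2 p3 L0 x /\
  forall n : int, 2 <= n -> Lle p1 p2 p3 x (Ladd (Lscale n Lomega) Lc).

(* O(x) and O(y) lie in the same tau-orbit, tau O(x) = O(x + omega):
   y = x + n omega in L for some integer n. *)
Definition same_tau_orbit (p1 p2 p3 : nat) (x y : Lrep) : Prop :=
  exists n : int, Leq p1 p2 p3 y (Ladd x (Lscale n Lomega)).

From HB Require Import structures.
From mathcomp Require Import all_boot all_order all_algebra.
From mathcomp Require Import zify ring.
Set Implicit Arguments. Unset Strict Implicit. Unset Printing Implicit Defensive.
Import Order.TTheory GRing.Theory Num.Theory.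
Local Open Scope ring_scope.

(* Write l(x) for the coefficient of c in the normal form of x.  Then x >= 0
   iff l(x) >= 0, and l(ω + c - x) = -1 - l(x); hence x + kω lies in S iff k
   is the least integer with l(x + kω) >= 0, so each τ-orbit meets S at most
   once.  It meets S at least once: the degree δ is additive, satisfies
   p1 p2 p3 l(x) <= δ(x) < p1 p2 p3 (l(x) + 3), and δ(ω) = - χ p1 p2 p3 > 0,
   so l(x + kω) < 0 for k << 0 and l(x + kω) >= 0 for k >> 0. *)

Definition Lopp (v : Lrep) : Lrep := mkL (- cx1 v) (- cx2 v) (- cx3 v) (- cc v).

Definition Ltau (x : Lrep) (k : int) : Lrep := Ladd x (Lscale k Lomega).

Lemma Lrep_ext (u v : Lrep) :
  cx1 u = cx1 v -> cx2 u = cx2 v -> cx3 u = cx3 v -> cc u = cc v -> u = v.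
Proof. by case: u; case: v => /= ? ? ? ? ? ? ? ? -> -> -> ->. Qed.

Ltac Lrep_ring :=
  apply: Lrep_ext; rewrite /Ltau /Ladd /Lopp /Lscale /Lomega /Lc /L0 /=; ring.

Lemma Laddr0 v : Ladd v L0 = v.
Proof. by Lrep_ring. Qed.

Lemma Ltau0 x : Ltau x 0 = x.
Proof. by Lrep_ring. Qed.

Lemma Ltau_add x a b : Ltau (Ltau x a) b = Ltau x (a + b).
Proof. by Lrep_ring. Qed.

Lemma divz_modDl (a b d : int) :
  d != 0 -> (((a %% d)%Z + b) %/ d)%Z = ((a + b) %/ d)%Z - (a %/ d)%Z.
Proof.
move=> d0; have -> : a + b = (a %/ d)%Z * d + ((a %% d)%Z + b) by rewrite addrA -divz_eq.
by rewrite divzMDl // [RHS]addrC addKr.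
Qed.

Lemma divzN1B (a d : int) : 0 < d -> ((-1 - a) %/ d)%Z = -1 - (a %/ d)%Z.
Proof.
move=> d_gt0; have r_ge0 := modz_ge0 a (lt0r_neq0 d_gt0); have r_lt := ltz_pmod a d_gt0.
rewrite {1}(divz_eq a d) (_ : _ - _ = (-1 - (a %/ d)%Z) * d + (d - 1 - (a %% d)%Z)); last by ring.
rewrite divzMDl ?lt0r_neq0 // (divz_small (m := d - 1 - _)) ?addr0 // gtz0_abs //.
by move: r_ge0 r_lt; move: (a %% d)%Z => r; lia.
Qed.

Lemma int_least (P : pred int) (b : int) :
  (exists k, P k) -> (forall k, P k -> b <= k) -> {k | P k & forall j, P j -> k <= j}.
Proof.
move=> exP lbP.
have shift j : P j -> b + (absz (j - b))%:Z = j.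
  by move=> /lbP b_le_j; rewrite gez0_abs ?subr_ge0 // subrKC.
have exQ : exists n : nat, P (b + n%:Z) by case: exP => k Pk; exists (absz (k - b)); rewrite shift.
exists (b + (ex_minn exQ)%:Z) => [|j Pj]; case: ex_minnP => // n _ min_n.
by rewrite -[j](shift j Pj) lerD2l lez_nat min_n ?shift.
Qed.

Section StringGroup.

Variables p1 p2 p3 : nat.
Hypotheses (p1_gt0 : (0 < p1)%N) (p2_gt0 : (0 < p2)%N) (p3_gt0 : (0 < p3)%N).

Local Notation Lnf := (Lnf p1 p2 p3).
Local Notation Leq := (Leq p1 p2 p3).
Local Notation Lle := (Lle p1 p2 p3).
Local Notation inS := (inS p1 p2 p3).

Let p1_neq0 : p1%:Z != 0. Proof. by rewrite eqz_nat -lt0n. Qed.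
Let p2_neq0 : p2%:Z != 0. Proof. by rewrite eqz_nat -lt0n. Qed.
Let p3_neq0 : p3%:Z != 0. Proof. by rewrite eqz_nat -lt0n. Qed.

Definition lval (v : Lrep) : int := cc (Lnf v).

Lemma Lnf_addl u w : Lnf (Ladd (Lnf u) w) = Lnf (Ladd u w).
Proof.
rewrite /Lnf /Ladd /=; congr mkL; [exact: modzDml.. |].
by rewrite !divz_modDl //; ring.
Qed.

Lemma Lnf_id v : Lnf (Lnf v) = Lnf v.
Proof. by have := Lnf_addl v L0; rewrite !Laddr0. Qed.

Lemma Lnf_p1x1_c (k a b c d : int) : Lnf (mkL (k * p1 + a) b c d) = Lnf (mkL a b c (k + d)).
Proof. by rewrite /Lnf /=; congr mkL; rewrite ?modzMDl ?divzMDl //; ring. Qed.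

Lemma Leq_addr u v w : Leq u v -> Leq (Ladd u w) (Ladd v w).
Proof. by rewrite /Leq -Lnf_addl => ->; rewrite Lnf_addl. Qed.

Lemma Leq_Ltau u v k : Leq u v -> Leq (Ltau u k) (Ltau v k).
Proof. exact: Leq_addr. Qed.

Lemma lval_Leq u v : Leq u v -> lval u = lval v.
Proof. by rewrite /lval => ->. Qed.

Lemma Lle_Leq x x' y y' : Leq x x' -> Leq y y' -> Lle x y -> Lle x' y'.
Proof.
move=> xx' yy' [a [b [c yx]]]; exists a, b, c.
by rewrite /Leq -yy' yx; apply: Leq_addr.
Qed.

Lemma inS_Leq u v : Leq u v -> inS u -> inS v.
Proof.
move=> uv [u_ge0 u_le]; split=> [|n n_ge2]; first exact: Lle_Leq u_ge0.
exact: Lle_Leq (u_le n n_ge2).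
Qed.

Lemma Lle0_lval v : Lle L0 v <-> 0 <= lval v.
Proof.
split=> [[a [b [c va]]] | lv_ge0].
  by rewrite (lval_Leq va) /lval /Lnf /= !add0r !addr_ge0 // divz_ge0 // ltz_nat.
case Ev: (Lnf v) lv_ge0 => [r1 r2 r3 m] /=; rewrite /lval Ev /= => m_ge0.
have r1_ge0 : 0 <= r1 by move: Ev => [<- _ _ _]; apply: modz_ge0.
have r2_ge0 : 0 <= r2 by move: Ev => [_ <- _ _]; apply: modz_ge0.
have r3_ge0 : 0 <= r3 by move: Ev => [_ _ <- _]; apply: modz_ge0.
exists (absz (m * p1 + r1)), (absz r2), (absz r3).
rewrite !gez0_abs ?addr_ge0 ?mulr_ge0 //.
rewrite /Leq (_ : Ladd L0 _ = mkL (m * p1 + r1) r2 r3 0); last by Lrep_ring.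
by rewrite Lnf_p1x1_c addr0 -Ev Lnf_id.
Qed.

Lemma Lle_lval x y : Lle x y <-> 0 <= lval (Ladd y (Lopp x)).
Proof.
rewrite -Lle0_lval; split=> [[a [b [c yx]]] | [a [b [c yx]]]]; exists a, b, c.
  move/(Leq_addr (Lopp x)): yx; congr (Lnf _ = Lnf _); Lrep_ring.
move/(Leq_addr x): yx; congr (Lnf _ = Lnf _); Lrep_ring.
Qed.

Lemma lval_dual v : lval (Ladd (Ladd Lomega Lc) (Lopp v)) = -1 - lval v.
Proof.
rewrite /lval /Lnf /Ladd /Lopp /=.
by rewrite !divzN1B ?ltz_nat //; ring.
Qed.

Lemma inS_LtauE x k :
  inS (Ltau x k) <-> 0 <= lval (Ltau x k) /\ forall j, j < k -> lval (Ltau x j) < 0.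
Proof.
have dual n j : Ladd (Ladd (Lscale n Lomega) Lc) (Lopp (Ltau x j)) =
                Ladd (Ladd Lomega Lc) (Lopp (Ltau x (j - n + 1))) by Lrep_ring.
rewrite /inS !Lle_lval (_ : Ladd _ (Lopp L0) = Ltau x k); last by Lrep_ring.
split=> -[lx_ge0 lx_dual]; split=> //; [move=> j lt_jk | move=> n n_ge2].
- have := lx_dual (k - j + 1) ltac:(lia).
  by rewrite Lle_lval dual lval_dual (_ : k - _ + 1 = j); [lia | ring].
- rewrite Lle_lval dual lval_dual; have := lx_dual (k - n + 1) ltac:(lia); lia.
Qed.

(* p1 p2 p3 times the degree with deg x_i = 1 / p_i and deg c = 1 *)
Definition Ldeg (v : Lrep) : int :=
  cc v * (p1%:Z * p2%:Z * p3%:Z) + cx1 v * (p2%:Z * p3%:Z)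
  + cx2 v * (p1%:Z * p3%:Z) + cx3 v * (p1%:Z * p2%:Z).

Lemma Ldeg_Lnf v : Ldeg (Lnf v) = Ldeg v.
Proof.
rewrite /Ldeg /Lnf /= [in RHS](divz_eq (cx1 v) p1) [in RHS](divz_eq (cx2 v) p2).
by rewrite [in RHS](divz_eq (cx3 v) p3); ring.
Qed.

Lemma Ldeg_Ltau x k : Ldeg (Ltau x k) = Ldeg x + k * Ldeg Lomega.
Proof. by rewrite /Ldeg /Ltau /Ladd /Lscale /=; ring. Qed.

Lemma Ldeg_lval v :
  lval v * (p1%:Z * p2%:Z * p3%:Z) <= Ldeg v < (lval v + 3) * (p1%:Z * p2%:Z * p3%:Z).
Proof.
have term_bound (a p w : int) : 0 < p -> 0 < w -> 0 <= (a %% p)%Z * w < p * w.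
  move=> p_gt0 w_gt0; have := modz_ge0 a (lt0r_neq0 p_gt0); have := ltz_pmod a p_gt0.
  by move: (a %% p)%Z => r; nia.
have P1 : 0 < p1%:Z by rewrite ltz_nat.
have P2 : 0 < p2%:Z by rewrite ltz_nat.
have P3 : 0 < p3%:Z by rewrite ltz_nat.
rewrite -Ldeg_Lnf /lval /Ldeg /Lnf /=.
have := term_bound (cx1 v) _ (p2%:Z * p3%:Z) P1 (mulr_gt0 P2 P3).
have := term_bound (cx2 v) _ (p1%:Z * p3%:Z) P2 (mulr_gt0 P1 P3).
have := term_bound (cx3 v) _ (p1%:Z * p2%:Z) P3 (mulr_gt0 P1 P2).
move: (cc v + _ + _ + _) => l; lia.
Qed.

Lemma Ldeg_omega_chiX :
  (Ldeg Lomega)%:~R = - chiX p1 p2 p3 * (p1 * p2 * p3)%:R :> rat.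
Proof.
have q1 : p1%:R != 0 :> rat by rewrite pnatr_eq0 -lt0n.
have q2 : p2%:R != 0 :> rat by rewrite pnatr_eq0 -lt0n.
have q3 : p3%:R != 0 :> rat by rewrite pnatr_eq0 -lt0n.
rewrite /Ldeg /chiX /= !(intrD, intrM, intrN) !natrM /=.
by field; rewrite q1 q2 q3.
Qed.

Section NegativeEulerCharacteristic.

Hypothesis Ldeg_omega_gt0 : 0 < Ldeg Lomega.

Lemma lval_Ltau_ge0_exists x : exists k, 0 <= lval (Ltau x k).
Proof.
pose N := p1%:Z * p2%:Z * p3%:Z.
have N_gt0 : 0 < N by rewrite !mulr_gt0 ?ltz_nat.
exists (`|Ldeg x| + 3 * N).
have := Ldeg_lval (Ltau x (`|Ldeg x| + 3 * N)); rewrite Ldeg_Ltau -/N.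
have := ler_norm (- Ldeg x); rewrite normrN.
have := Ldeg_omega_gt0; nia.
Qed.

Lemma lval_Ltau_ge0_lb x k : 0 <= lval (Ltau x k) -> - `|Ldeg x| <= k.
Proof.
pose N := p1%:Z * p2%:Z * p3%:Z.
have N_ge0 : 0 <= N by rewrite !mulr_ge0.
move=> l_ge0; have := Ldeg_lval (Ltau x k); rewrite Ldeg_Ltau -/N.
have := ler_norm (Ldeg x).
have := Ldeg_omega_gt0; nia.
Qed.

Definition orbit_index x : int :=
  s2val (int_least (P := fun k => 0 <= lval (Ltau x k))
                   (lval_Ltau_ge0_exists x) (@lval_Ltau_ge0_lb x)).

Lemma inS_Ltau x k : inS (Ltau x k) <-> k = orbit_index x.
Proof.
rewrite inS_LtauE /orbit_index; case: int_least => m lm_ge0 min_m /=.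
split=> [[lk_ge0 below_k] | ->].
  apply/eqP; rewrite eq_le min_m // andbT leNgt; apply/negP => /below_k; lia.
by split=> // j lt_jm; rewrite ltNge; apply/negP => /min_m; lia.
Qed.

Lemma orbit_index_Leq x y n : Leq y (Ltau x n) -> orbit_index x = n + orbit_index y.
Proof.
move=> yx; apply/esym/inS_Ltau; rewrite -Ltau_add.
by apply: inS_Leq (Leq_Ltau (orbit_index y) yx) _; apply/inS_Ltau.
Qed.

Lemma Leq_orbit_index x y :
  Leq (Ltau x (orbit_index x)) (Ltau y (orbit_index y)) <-> same_tau_orbit p1 p2 p3 x y.
Proof.
split=> [fxy | [n yx]].
  exists (orbit_index x - orbit_index y); apply/esym.
  by move/(Leq_Ltau (- orbit_index y)): fxy; rewrite !Ltau_add subrr Ltau0.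
by rewrite (orbit_index_Leq yx) -Ltau_add; apply/esym/Leq_Ltau.
Qed.

End NegativeEulerCharacteristic.

End StringGroup.

Theorem proposition5p1 (p1 p2 p3 : nat) :
  (2 <= p1)%N -> (2 <= p2)%N -> (2 <= p3)%N ->
  chiX p1 p2 p3 < 0 ->
  exists f : Lrep -> Lrep,
    [/\ forall x, inS p1 p2 p3 (f x),
        forall x y, Leq p1 p2 p3 (f x) (f y) <-> same_tau_orbit p1 p2 p3 x y
      & forall s, inS p1 p2 p3 s -> exists x, Leq p1 p2 p3 (f x) s].
Proof.
move=> /ltnW p1_gt0 /ltnW p2_gt0 /ltnW p3_gt0 chi_lt0.
have deg_gt0 : 0 < Ldeg p1 p2 p3 Lomega.
  rewrite -(ltr0z rat) Ldeg_omega_chiX // pmulr_rgt0 ?oppr_gt0 //.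
  by rewrite ltr0n !muln_gt0 p1_gt0 p2_gt0 p3_gt0.
pose f x := Ltau x (orbit_index p1_gt0 p2_gt0 p3_gt0 deg_gt0 x).
exists f; split=> [x | x y | s Ss].
- exact/inS_Ltau.
- exact: Leq_orbit_index.
- exists s; have : inS p1 p2 p3 (Ltau s 0) by rewrite Ltau0.
  by rewrite /f => /inS_Ltau <-; rewrite Ltau0.
Qed.
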